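(* Let $k$ be a field, $S=k[x_1,\dots,x_n]$, $\mathfrak m=(x_1,\dots,x_n)$, and let $I=(f_1,\dots,f_r)\subseteq S$ be a linearly presented $\mathfrak m$-primary ideal. Let $B=k[T_1,\dots,T_r]$, let $\Theta$ be the Jacobian dual matrix of a presentation matrix of $I$, and let $I_n(\Theta)\subseteq B$ be the ideal of its $n\times n$ minors. Let $W\subseteq\mathbb P^{r-1}$ be the image of the map $\phi:\mathbb P^{n-1}\to\mathbb P^{r-1}$, $\phi(\mathbf x)=(f_1(\mathbf x):\dots:f_r(\mathbf x))$, and $I(W)\subseteq B$ its homogeneous defining ideal. Then $\sqrt{I_n(\Theta)}=I(W)$.
   Context: ''Linearly presented'' means $I$ is generated by forms $f_1,\dots,f_r$ of a common degree $d$ and its module of syzygies is generated by syzygies $\sum_i a_i(\mathbf x)f_i=0$ with the $a_i$ linear forms. The defining ideal $J\subseteq k[x_1,\dots,x_n,T_1,\dots,T_r]$ of the symmetric algebra $\mathrm{Sym}(I)$ is generated by the bilinear forms $L=\sum_i a_i(\mathbf x)T_i$ attached to the linear syzygies; let $L_1,\dots,L_N$ be minimal generators of $J$ (corresponding to minimal generators of the syzygy module). The Jacobian dual $\Theta$ is the $N\times n$ matrix whose entries are linear forms in $T_1,\dots,T_r$ such that $\Theta\cdot(x_1,\dots,x_n)^T=(L_1,\dots,L_N)^T$. Since $I$ is $\mathfrak m$-primary, $\phi$ is a morphism; $I(W)$ is the kernel of the $k$-algebra map $B\to S$, $T_i\mapsto f_i$. *)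

From HB Require Import structures.
From mathcomp Require Import all_boot all_order all_algebra.
From mathcomp Require Import mpoly.
Set Implicit Arguments. Unset Strict Implicit. Unset Printing Implicit Defensive.
Import GRing.Theory.
Local Open Scope ring_scope.

Definition in_ideal (k : fieldType) (n : nat) (I : finType)
    (g : I -> {mpoly k[n]}) (p : {mpoly k[n]}) : Prop :=
  exists c : I -> {mpoly k[n]}, p = \sum_(i : I) c i * g i.

Definition in_radical (k : fieldType) (n : nat) (I : finType)
    (g : I -> {mpoly k[n]})
    (p : {mpoly k[n]}) : Prop :=
  exists e : nat, in_ideal g (p ^+ e).

Definition is_syzygy (k : fieldType) (n r : nat) (f : 'I_r -> {mpoly k[n]})
    (b : 'I_r -> {mpoly k[n]}) : Prop :=
  \sum_(i < r) b i * f i = 0.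

Definition in_submodule (k : fieldType) (n r N : nat)
    (a : 'I_N -> 'I_r -> {mpoly k[n]}) (P : pred 'I_N)
    (b : 'I_r -> {mpoly k[n]}) : Prop :=
  exists c : 'I_N -> {mpoly k[n]},
    forall i : 'I_r, b i = \sum_(j < N | P j) c j * a j i.

Definition minimal_linear_presentation (k : fieldType) (n r N : nat)
    (f : 'I_r -> {mpoly k[n]}) (a : 'I_N -> 'I_r -> {mpoly k[n]}) : Prop :=
  [/\ forall j i, a j i \is 1.-homog,
      forall j, is_syzygy f (a j),
      forall b, is_syzygy f b -> in_submodule a predT b &
      forall j, ~ in_submodule a (predC1 j) (a j)].

(* The Jacobian dual matrix Theta (N x n, entries linear forms in T_1..T_r)
   of the linear syzygies a: the bilinear form L_j = sum_i a_{ji}(x) T_i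
   equals sum_l Theta_{jl} x_l, i.e. Theta_{jl} = sum_i [x_l](a_{ji}) T_i. *)
Definition jacobian_dual (k : fieldType) (n r N : nat)
    (a : 'I_N -> 'I_r -> {mpoly k[n]}) : 'M[{mpoly k[r]}]_(N, n) :=
  \matrix_(j < N, l < n) \sum_(i < r) ((a j i)@_(U_(l)%MM)) *: 'X_i.

Definition maximal_minors (R : comNzRingType) (N n : nat) (M : 'M[R]_(N, n))
    : {ffun 'I_n -> 'I_N} -> R :=
  fun s => if injectiveb s then \det (rowsub s M) else 0.

(* I(W) : kernel of the k-algebra map B = k[T_1..T_r] -> S, T_i |-> f_i. *)
Definition image_ideal (k : fieldType) (n r : nat) (f : 'I_r -> {mpoly k[n]})
    (g : {mpoly k[r]}) : Prop :=
  g \mPo [tuple f i | i < r] = 0.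

From HB Require Import structures.
From mathcomp Require Import all_boot all_order all_algebra.
From mathcomp Require Import perm mpoly.
From mathcomp Require Import boolp classical_sets.
From mathcomp Require Import ring.
Set Implicit Arguments. Unset Strict Implicit. Unset Printing Implicit Defensive.
Import GRing.Theory.
Local Open Scope ring_scope.

(* If g is not in the radical of I_n(Theta), Zorn's lemma gives a prime P of B
   containing I_n(Theta) but not g.  All maximal minors of Theta vanish modulo
   P, so by Cramer's rule Theta has a kernel vector p modulo P with a
   coordinate p_c outside P.  Substituting x := p in the syzygies of f, which
   all come from the rows of Theta, gives sum_i b_i(p) T_i in P for every
   syzygy b.  For the Koszul syzygies f_m e_i - f_i e_m, together with
   x_c^e = sum_m h_m f_m, this says that modulo P the generic point T is the
   point f(p) of W rescaled: mu T_i = H f_i(p) with mu = p_c^e outside P.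
   Hence every form G with G(f) = 0 satisfies mu^(deg G) G in P, so G is in P,
   and then so is g.  Conversely each maximal minor of Theta vanishes at T = f,
   because Theta(f) kills the nonzero vector x. *)

Lemma sumr_delta (R : pzSemiRingType) (I : finType) (F : I -> R) i :
  \sum_j (j == i)%:R * F j = F i.
Proof.
by rewrite (bigD1 i) //= eqxx mul1r big1 ?addr0 // => j /negbTE ->; rewrite mul0r.
Qed.

Section Ideals.
Local Open Scope classical_set_scope.
Variable B : comPzRingType.
Implicit Types (P J : set B) (a c x y : B).

Definition is_ideal P :=
  [/\ P 0, forall x y, P x -> P y -> P (x + y) & forall c x, P x -> P (c * x)].

Definition is_prime_ideal P :=
  [/\ is_ideal P, ~ P 1 & forall x y, P (x * y) -> P x \/ P y].

Section IdealTheory.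
Variable P : set B.
Hypothesis P_ideal : is_ideal P.

Lemma ideal0 : P 0. Proof. by case: P_ideal. Qed.

Lemma idealD x y : P x -> P y -> P (x + y).
Proof. by case: P_ideal => _ + _; apply. Qed.

Lemma idealMl c x : P x -> P (c * x).
Proof. by case: P_ideal => _ _; apply. Qed.

Lemma ideal_sum (I : Type) (r : seq I) (Q : pred I) (F : I -> B) :
  (forall i, Q i -> P (F i)) -> P (\sum_(i <- r | Q i) F i).
Proof. by apply: big_ind; [exact: ideal0 | exact: idealD]. Qed.

Lemma ideal_congrM x1 y1 x2 y2 :
  P (x1 - y1) -> P (x2 - y2) -> P (x1 * x2 - y1 * y2).
Proof.
move=> P1 P2; have -> : x1 * x2 - y1 * y2 = x2 * (x1 - y1) + y1 * (x2 - y2) by ring.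
by apply: idealD; apply: idealMl.
Qed.

Lemma ideal_congr_prod (I : Type) (r : seq I) (Q : pred I) (X Y : I -> B) :
  (forall i, Q i -> P (X i - Y i)) ->
  P (\prod_(i <- r | Q i) X i - \prod_(i <- r | Q i) Y i).
Proof.
move=> PXY; apply: (big_ind2 (fun x y => P (x - y))) => //.
  by rewrite subrr; apply: ideal0.
by move=> *; apply: ideal_congrM.
Qed.

Lemma ideal_congrX x y e : P (x - y) -> P (x ^+ e - y ^+ e).
Proof.
move=> Pxy; elim: e => [|e IHe]; first by rewrite !expr0 subrr; apply: ideal0.
by rewrite !exprS; apply: ideal_congrM.
Qed.

End IdealTheory.

Lemma prime_idealX P x e : is_prime_ideal P -> ~ P x -> ~ P (x ^+ e).
Proof.
case=> _ nP1 Pmul nPx; elim: e => [|e IHe]; first by rewrite expr0.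
by rewrite exprS => /Pmul [].
Qed.

Section PrimeAvoidance.
Variables (J : set B) (g : B).

Definition avoids_powers P := [/\ is_ideal P, J `<=` P & forall e, ~ P (g ^+ e)].

Lemma avoids_powers_bigcup (F : set (set B)) :
  (forall X, F X -> X = set0 \/ avoids_powers X) -> total_on F subset ->
  (exists2 X, F X & avoids_powers X) -> avoids_powers (\bigcup_(X in F) X).
Proof.
move=> F_avoids F_total [X0 FX0 [X0_ideal JX0 _]].
have avoids X x : F X -> X x -> avoids_powers X.
  by move=> FX Xx; case: (F_avoids X FX) => // X_0; rewrite X_0 in Xx.
split; first split.
- by exists X0 => //; apply: ideal0.
- move=> x y [X FX Xx] [Y FY Yy].
  have [XY|YX] := F_total X Y FX FY.
  + have [Y_ideal _ _] := avoids Y y FY Yy.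
    by exists Y => //; apply: idealD => //; apply: XY.
  + have [X_ideal _ _] := avoids X x FX Xx.
    by exists X => //; apply: idealD => //; apply: YX.
- move=> c x [X FX Xx]; have [X_ideal _ _] := avoids X x FX Xx.
  by exists X => //; apply: idealMl.
- by move=> x Jx; exists X0 => //; apply: JX0.
- by move=> e [X FX Xg]; have [_ _ /(_ e)] := avoids X _ FX Xg.
Qed.

Definition ideal_adjoin P a : set B := [set x | exists y c, P y /\ x = y + c * a].

Lemma ideal_adjoin_ideal P a : is_ideal P -> is_ideal (ideal_adjoin P a).
Proof.
move=> P_ideal; split.
- by exists 0, 0; rewrite mul0r addr0; split => //; apply: ideal0.
- move=> _ _ [y1 [c1 [Py1 ->]]] [y2 [c2 [Py2 ->]]].
  by exists (y1 + y2), (c1 + c2); split; [apply: idealD | ring].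
- move=> c _ [y [c' [Py ->]]].
  by exists (c * y), (c * c'); split; [apply: idealMl | ring].
Qed.

Lemma maximal_avoids_powers_prime P :
  avoids_powers P -> (forall Q, P `<` Q -> ~ avoids_powers Q) -> is_prime_ideal P.
Proof.
move=> [P_ideal JP Pg] P_max; split => //; first by have := Pg 0%N; rewrite expr0.
have adjoin_hits_power a : ~ P a -> exists e y c, P y /\ g ^+ e = y + c * a.
  move=> nPa; apply: contrapT => no_power; apply: (P_max (ideal_adjoin P a)).
    split; first by move=> x Px; exists x, 0; rewrite mul0r addr0.
    move=> /(_ a) Pa; apply/nPa/Pa; exists 0, 1.
    by rewrite add0r mul1r; split => //; apply: ideal0.
  split; first exact: ideal_adjoin_ideal.
    by move=> x /JP Px; exists x, 0; rewrite mul0r addr0.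
  by move=> e [y [c [Py ge]]]; apply: no_power; exists e, y, c.
move=> x y Pxy; apply: contrapT => /not_orP [nPx nPy].
have [e1 [y1 [c1 [Py1 E1]]]] := adjoin_hits_power x nPx.
have [e2 [y2 [c2 [Py2 E2]]]] := adjoin_hits_power y nPy.
apply: (Pg (e1 + e2)%N); rewrite exprD E1 E2.
have -> : (y1 + c1 * x) * (y2 + c2 * y) =
    (y1 + c1 * x) * y2 + (c2 * y) * y1 + (c1 * c2) * (x * y) by ring.
by do 2?apply: (idealD P_ideal); apply: (idealMl P_ideal).
Qed.

Lemma exists_prime_avoiding_powers :
  is_ideal J -> (forall e, ~ J (g ^+ e)) ->
  exists P, [/\ is_prime_ideal P, J `<=` P & ~ P g].
Proof.
move=> J_ideal Jg.
(* set0 is admitted so that the empty chain has an upper bound. *)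
pose Fam X := X = set0 \/ avoids_powers X.
have [P [FamP P_max]] : exists P, Fam P /\ forall Q, P `<` Q -> ~ Fam Q.
  apply: Zorn_bigcup => F F_Fam F_total.
  have [[X FX X_avoids]|none] := pselect (exists2 X, F X & avoids_powers X).
    by right; apply: avoids_powers_bigcup => //; exists X.
  left; apply/seteqP; split => // x [X FX Xx].
  by case: (F_Fam X FX) => [X_0|X_avoids]; [rewrite X_0 in Xx | case: none; exists X].
have P_avoids : avoids_powers P.
  case: FamP => // P_0; exfalso; apply: (P_max J); last by right; split.
  by rewrite P_0; split => // /(_ 0 (ideal0 J_ideal)).
have [_ JP Pg] := P_avoids.
exists P; split => //; last by have := Pg 1%N; rewrite expr1.
by apply: maximal_avoids_powers_prime => // Q PQ Q_avoids; apply: (P_max Q PQ); right.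
Qed.

End PrimeAvoidance.
End Ideals.

Lemma nat_threshold (Q : nat -> Prop) n :
  Q 0%N -> ~ Q n -> exists2 m, (m < n)%N & Q m /\ ~ Q m.+1.
Proof.
elim: n => [//|n IHn] Q0 nQn1.
have [Qn|nQn] := pselect (Q n); first by exists n.
by have [m ltmn Qm] := IHn Q0 nQn; exists m => //; apply: ltnW.
Qed.

Lemma exists_notin_codom m n : (m < n)%N -> forall C : 'I_m -> 'I_n,
  exists c, c \notin codom C.
Proof.
move=> ltmn C; apply: contrapT => all_in.
have : (#|'I_n| <= size (codom C))%N.
  apply: (leq_trans _ (card_size _)); apply/subset_leq_card/fintype.subsetP => x _.
  by apply: contrapT => /negP nx; apply: all_in; exists x.
by rewrite size_codom !card_ord leqNgt ltmn.
Qed.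

Definition consf (X : Type) m (x : X) (F : 'I_m -> X) (k : 'I_m.+1) : X :=
  oapp F x (unlift ord0 k).

Lemma consf0 (X : Type) m (x : X) (F : 'I_m -> X) : consf x F ord0 = x.
Proof. by rewrite /consf unlift_none. Qed.

Lemma consf_lift (X : Type) m (x : X) (F : 'I_m -> X) k : consf x F (lift ord0 k) = F k.
Proof. by rewrite /consf liftK. Qed.

Section MaximalMinors.
Variables (B : comNzRingType) (N n : nat) (T : 'M[B]_(N, n)).

Lemma det_mxsub_consf_linear m (R : 'I_m -> 'I_N) (C : 'I_m -> 'I_n) (c : 'I_n) :
  c \notin codom C ->
  exists2 p : 'I_n -> B, p c = \det (mxsub R C T) &
    forall j, \det (mxsub (consf j R) (consf c C) T) = \sum_l T j l * p l.
Proof.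
move=> cC; pose cof (k : 'I_m.+1) := (-1) ^+ k * \det (mxsub R (consf c C \o lift k) T).
exists (fun l => \sum_(k | consf c C k == l) cof k).
  rewrite (big_pred1 ord0) => [|k]; last first.
    case: (unliftP ord0 k) => [k' ->|->]; last by rewrite consf0 !eqxx.
    rewrite consf_lift /= [lift _ _ == _]eq_sym (negbTE (neq_lift _ _)); apply/negbTE.
    by apply: contra cC => /eqP <-; apply: codom_f.
  rewrite /cof expr0 mul1r; congr (\det _).
  by apply/matrixP => i k; rewrite !mxE /= consf_lift.
move=> j; rewrite (expand_det_row _ ord0) (partition_big (consf c C) predT) //=.
apply: eq_bigr => l _; rewrite mulr_sumr; apply: eq_bigr => k /eqP <-.
rewrite !mxE consf0; congr (_ * (_ * \det _)).
by apply/matrixP => i k'; rewrite !mxE consf_lift.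
Qed.

Variable P : set B.
Hypotheses (P_ideal : is_ideal P) (P_minors : forall s, P (maximal_minors T s)).

Lemma ideal_det_mxsub (R : 'I_n -> 'I_N) (C : 'I_n -> 'I_n) : P (\det (mxsub R C T)).
Proof.
have [/injectiveP R_inj|/injectivePn [i1 [i2 ne12 R12]]] := boolP (injectiveb R); last first.
  by rewrite (determinant_alternate ne12) => [|j]; [apply: ideal0 | rewrite !mxE R12].
have [/injectiveP C_inj|/injectivePn [i1 [i2 ne12 C12]]] := boolP (injectiveb C); last first.
  by rewrite -det_tr (determinant_alternate ne12) => [|j]; [apply: ideal0 | rewrite !mxE C12].
have -> : mxsub R C T = col_perm (perm C_inj) (rowsub R T).
  by apply/matrixP => i j; rewrite !mxE permE.
rewrite col_permE det_mulmx mulrC; apply: idealMl => //.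
have := P_minors (finfun R); rewrite /maximal_minors mxsub_ffunl.
suff -> : injectiveb (finfun R) by [].
by apply/injectiveP => x y; rewrite !ffunE; apply: R_inj.
Qed.

(* Take m maximal with an m-minor outside P (m < n as all n-minors lie in P);
   bordering it by a row j and an unused column c gives (m+1)-minors in P that
   are linear in row j, with the signed m-minors as coefficients. *)
Lemma kernel_vector_mod_ideal :
  ~ P 1 -> exists c (p : 'I_n -> B), ~ P (p c) /\ forall j, P (\sum_l T j l * p l).
Proof.
move=> nP1.
pose Q m := exists (R : 'I_m -> 'I_N) (C : 'I_m -> 'I_n), ~ P (\det (mxsub R C T)).
have Q0 : Q 0%N by exists (ffun0 (card_ord 0)), (ffun0 (card_ord 0)); rewrite det_mx00.
have nQn : ~ Q n by case=> R [C]; apply; apply: ideal_det_mxsub.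
have [m ltmn [[R [C nP_RC]] nQm1]] := nat_threshold Q0 nQn.
have [c cC] := exists_notin_codom ltmn C.
have [p pc p_expand] := det_mxsub_consf_linear R cC.
exists c, p; split; first by rewrite pc.
move=> j; rewrite -p_expand; apply: contrapT => nP; apply: nQm1.
by exists (consf j R), (consf c C).
Qed.

End MaximalMinors.

Lemma det_eq0_of_mulmx_eq0 (R : idomainType) n (A : 'M[R]_n) (v : 'cV_n) :
  v != 0 -> A *m v = 0 -> \det A = 0.
Proof.
move=> v_neq0 Av0; rewrite -det_tr; apply/eqP/det0P; exists v^T.
  by rewrite trmx_eq0.
by rewrite -trmx_mul Av0 trmx0.
Qed.

Section MpolyComp.
Variable R : comNzRingType.

Lemma dhomog1E n (p : {mpoly R[n]}) : p \is 1.-homog -> p = \sum_l p@_U_(l) *: 'X_l.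
Proof.
move=> p1; apply/mpolyP => m; rewrite raddf_sum /=.
have [/mdeg1P [l /eqP ->]|m_ne1] := boolP (mdeg m == 1%N).
  under eq_bigr do rewrite mcoeffZ mcoeffXU mulrC.
  by rewrite sumr_delta.
rewrite (dhomog_nemf_coeff p1 m_ne1) big1 // => l _.
rewrite mcoeffZ mcoeffX; case: eqP => [Ul_m|]; last by rewrite mulr0.
by move: m_ne1; rewrite -Ul_m mdeg1.
Qed.

Lemma comp_mpolyA n m k (p : {mpoly R[n]}) (t : 'I_n -> {mpoly R[m]})
    (u : m.-tuple {mpoly R[k]}) :
  (p \mPo [tuple t i | i < n]) \mPo u = p \mPo [tuple t i \mPo u | i < n].
Proof.
rewrite [p \mPo _]comp_mpolyEX [RHS]comp_mpolyEX raddf_sum; apply: eq_bigr => mm _.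
rewrite /= comp_mpolyZ !comp_mpolyX rmorph_prod; congr (_ *: _).
by apply: eq_bigr => i _; rewrite rmorphXn !tnth_mktuple.
Qed.

Lemma comp_mpoly_dhomogZ n k d (p : {mpoly R[n]}) (c : {mpoly R[k]})
    (t : 'I_n -> {mpoly R[k]}) :
  p \is d.-homog ->
  p \mPo [tuple c * t i | i < n] = c ^+ d * (p \mPo [tuple t i | i < n]).
Proof.
move=> /dhomogP pd; rewrite !comp_mpolyE mulr_sumr big_seq [RHS]big_seq.
apply: eq_bigr => m /pd <-; rewrite -scalerAr; congr (_ *: _).
under eq_bigr do rewrite tnth_mktuple exprMn.
rewrite big_split /= prodrXr mdegE.
by congr (_ * _); apply: eq_bigr => i _; rewrite tnth_mktuple.
Qed.

Lemma comp_mpolyX_dhomog n k d (m : 'X_{1..n}) (t : n.-tuple {mpoly R[k]}) :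
  (forall i, tnth t i \is d.-homog) -> 'X_[m] \mPo t \is (d * mdeg m).-homog.
Proof.
move=> td; rewrite comp_mpolyX mdegE big_distrr /=.
apply: (big_ind2 (fun e (q : {mpoly R[k]}) => q \is e.-homog)).
- exact: dhomog1.
- by move=> ? ? ? ? ? ?; apply: dhomogM.
- by move=> i _; apply: dhomogMn.
Qed.

Lemma pihomog_comp_mpoly n k d e (p : {mpoly R[n]}) (t : n.-tuple {mpoly R[k]}) :
  (0 < d)%N -> (forall i, tnth t i \is d.-homog) ->
  pihomog mdeg (d * e) (p \mPo t) = pihomog mdeg e p \mPo t.
Proof.
move=> d_gt0 td; elim/mpolyind: p => [|c m p _ _ IHp]; first by rewrite !linear0.
rewrite !linearP /= {}IHp; congr (c *: _ + _).
have Xm_homog := comp_mpolyX_dhomog m td.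
have [<-|ne] := eqVneq (mdeg m) e; first by rewrite !pihomog_dE // dhomogX.
rewrite (pihomog_ne0 _ Xm_homog); last by rewrite eqn_pmul2l.
by rewrite (pihomog_ne0 ne) ?linear0 ?dhomogX.
Qed.

Lemma ideal_comp_mpoly_congr n k (P : set {mpoly R[k]}) (p : {mpoly R[n]})
    (x y : 'I_n -> {mpoly R[k]}) :
  is_ideal P -> (forall i, P (x i - y i)) ->
  P ((p \mPo [tuple x i | i < n]) - (p \mPo [tuple y i | i < n])).
Proof.
move=> P_ideal Pxy; rewrite !comp_mpolyE -sumrB; apply: ideal_sum => // m _.
rewrite -scalerBr -mul_mpolyC; apply: idealMl => //.
by apply: ideal_congr_prod => // i _; rewrite !tnth_mktuple; apply: ideal_congrX.
Qed.

(* Modulo P, the generic point ('X_i) is the point v rescaled by H / mu. *)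
Lemma prime_ideal_dhomog_vanishing r (P : set {mpoly R[r]}) (mu H : {mpoly R[r]})
    (v : 'I_r -> {mpoly R[r]}) d (G : {mpoly R[r]}) :
  is_prime_ideal P -> ~ P mu -> (forall i, P (mu * 'X_i - H * v i)) ->
  G \is d.-homog -> G \mPo [tuple v i | i < r] = 0 -> P G.
Proof.
move=> P_prime nPmu P_point Gd Gv; have [P_ideal _ P_mul] := P_prime.
have : P (mu ^+ d * G - H ^+ d * (G \mPo [tuple v i | i < r])).
  rewrite -{1}(comp_mpoly_id G) -!comp_mpoly_dhomogZ //.
  exact: ideal_comp_mpoly_congr.
by rewrite Gv mulr0 subr0 => /P_mul [/(prime_idealX P_prime nPmu)|].
Qed.

End MpolyComp.

Lemma ideal_koszul_relations (S B : comNzRingType) r (ev : {rmorphism S -> B})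
    (P : set B) (f : 'I_r -> S) (t : 'I_r -> B) :
  is_ideal P ->
  (forall b, \sum_i b i * f i = 0 -> P (\sum_i ev (b i) * t i)) ->
  forall (h : 'I_r -> S) i,
    P (ev (\sum_m h m * f m) * t i - (\sum_m ev (h m) * t m) * ev (f i)).
Proof.
move=> P_ideal P_syz h i.
have P_koszul m : P (ev (f m) * t i - ev (f i) * t m).
  pose b j := (j == i)%:R * f m - (j == m)%:R * f i.
  have b_syz : \sum_j b j * f j = 0.
    under eq_bigr do rewrite mulrBl -!mulrA.
    by rewrite sumrB !sumr_delta mulrC subrr.
  have := P_syz b b_syz; congr P.
  under eq_bigr do rewrite rmorphB !rmorphM !rmorph_nat mulrBl -!mulrA.
  by rewrite sumrB !sumr_delta.
rewrite rmorph_sum !mulr_suml -sumrB; apply: ideal_sum => // m _.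
suff -> : ev (h m * f m) * t i - ev (h m) * t m * ev (f i) =
          ev (h m) * (ev (f m) * t i - ev (f i) * t m) by apply: idealMl.
by rewrite rmorphM; ring.
Qed.

Lemma in_ideal_is_ideal (k : fieldType) n (I : finType) (G : I -> {mpoly k[n]}) :
  is_ideal (in_ideal G).
Proof.
split.
- by exists (fun=> 0); rewrite big1 // => i _; rewrite mul0r.
- move=> _ _ [c1 ->] [c2 ->]; exists (fun i => c1 i + c2 i).
  by rewrite -big_split; apply: eq_bigr => i _; rewrite mulrDl.
- move=> c _ [c' ->]; exists (fun i => c * c' i).
  by rewrite mulr_sumr; apply: eq_bigr => i _; rewrite mulrA.
Qed.

Lemma in_ideal_gen (k : fieldType) n (I : finType) (G : I -> {mpoly k[n]}) i :
  in_ideal G (G i).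
Proof. by exists (fun j => (j == i)%:R); rewrite sumr_delta. Qed.

Lemma dhomog_generators_degree_gt0 (k : fieldType) n r d (f : 'I_r -> {mpoly k[n]})
    (l : 'I_n) e :
  (forall i, f i \is d.-homog) -> in_ideal f ('X_l ^+ e) -> ~ in_ideal f 1 ->
  (0 < d)%N.
Proof.
move=> f_homog [h Eh] not_unit; rewrite lt0n; apply/negP => /eqP d0.
have fC i : f i = ((f i)@_0%MM)%:MP.
  apply/mpolyP => m; rewrite mcoeffC; have [->|m_ne0] := eqVneq m 0%MM.
    by rewrite mulr1.
  by rewrite mulr0 (dhomog_nemf_coeff (f_homog i)) // d0 mdeg_eq0.
have [[i fi_ne0]|f0] := pselect (exists i, (f i)@_0%MM != 0).
  apply: not_unit; exists (fun j => (j == i)%:R * ((f i)@_0%MM)^-1%:MP).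
  under eq_bigr do rewrite -mulrA.
  by rewrite sumr_delta {2}fC -mpolyCM mulVf.
move: Eh; rewrite big1 => [/eqP|j _]; last first.
  have [fj0|fj_ne0] := eqVneq (f j)@_0%MM 0; last by case: f0; exists j.
  by rewrite fC fj0 mpolyC0 mulr0.
by rewrite expf_eq0 -msupp_eq0 msuppX andbF.
Qed.

Lemma jacobian_dual_duality (k : fieldType) n r N (a : 'I_N -> 'I_r -> {mpoly k[n]}) m
    (x : 'I_n -> {mpoly k[m]}) (t : 'I_r -> {mpoly k[m]}) j :
  (forall i, a j i \is 1.-homog) ->
  \sum_l (jacobian_dual a j l \mPo [tuple t i | i < r]) * x l =
  \sum_i (a j i \mPo [tuple x l | l < n]) * t i.
Proof.
move=> aj_linear.
under eq_bigr => l _ do rewrite mxE raddf_sum mulr_suml.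
rewrite exchange_big /=; apply: eq_bigr => i _.
rewrite [in RHS](dhomog1E (aj_linear i)) raddf_sum mulr_suml; apply: eq_bigr => l _.
by rewrite /= !comp_mpolyZ !comp_mpolyXU !nth_mktuple -!scalerAl mulrC.
Qed.

Section JacobianDual.
Variables (k : fieldType) (n r N d : nat).
Variables (f : 'I_r -> {mpoly k[n]}) (a : 'I_N -> 'I_r -> {mpoly k[n]}).
Hypothesis a_linear : forall j i, a j i \is 1.-homog.
Hypothesis a_syz : forall j, is_syzygy f (a j).

Lemma maximal_minors_jacobian_dual_at_forms s : (0 < n)%N ->
  maximal_minors (jacobian_dual a) s \mPo [tuple f i | i < r] = 0.
Proof.
move=> n_gt0; rewrite /maximal_minors; case: ifP => _; last exact: raddf0.
rewrite -det_map_mx; apply: (@det_eq0_of_mulmx_eq0 _ _ _ (\col_l 'X_l)).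
  apply/eqP => /matrixP /(_ (Ordinal n_gt0) ord0) /eqP; rewrite !mxE.
  by rewrite -msupp_eq0 msuppX.
apply/matrixP => i z; rewrite !mxE -[RHS](a_syz (s i)).
rewrite /is_syzygy; under [RHS]eq_bigr do rewrite -[a _ _]comp_mpoly_id.
by rewrite -jacobian_dual_duality //; apply: eq_bigr => l _; rewrite !mxE.
Qed.

Lemma image_ideal_of_radical g : (0 < n)%N ->
  in_radical (maximal_minors (jacobian_dual a)) g -> image_ideal f g.
Proof.
move=> n_gt0 [e [c gE]]; have := congr1 (comp_mpoly [tuple f i | i < r]) gE.
rewrite rmorphXn rmorph_sum big1 => [/eqP|s _]; last first.
  by rewrite rmorphM /= maximal_minors_jacobian_dual_at_forms // mulr0.
by rewrite expf_eq0 => /andP [_ /eqP].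
Qed.

Hypothesis f_homog : forall i, f i \is d.-homog.
Hypothesis m_primary : forall l : 'I_n, exists e : nat, in_ideal f ('X_l ^+ e).
Hypothesis not_unit : ~ in_ideal f 1.
Hypothesis a_gen : forall b, is_syzygy f b -> in_submodule a predT b.

Lemma image_ideal_sub_prime (P : set {mpoly k[r]}) g :
  is_prime_ideal P -> (forall s, P (maximal_minors (jacobian_dual a) s)) ->
  image_ideal f g -> P g.
Proof.
move=> P_prime P_minors gf; have [P_ideal nP1 _] := P_prime.
have [c [p [nPpc P_ker]]] := kernel_vector_mod_ideal P_ideal P_minors nP1.
pose u := [tuple p l | l < n].
have P_rows j : P (\sum_i (a j i \mPo u) * 'X_i).
  rewrite -(jacobian_dual_duality p (fun i => 'X_i) (a_linear j)).
  by under eq_bigr do rewrite comp_mpoly_id; apply: P_ker.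
have P_syz b : is_syzygy f b -> P (\sum_i (b i \mPo u) * 'X_i).
  case/a_gen => coef b_coef.
  have -> : \sum_i (b i \mPo u) * 'X_i =
            \sum_j (coef j \mPo u) * \sum_i (a j i \mPo u) * 'X_i.
    under eq_bigr do rewrite b_coef rmorph_sum mulr_suml.
    rewrite exchange_big; apply: eq_bigr => j _; rewrite mulr_sumr.
    by apply: eq_bigr => i _; rewrite rmorphM mulrA.
  by apply: ideal_sum => // j _; apply: idealMl.
have [e [h Eh]] := m_primary c.
have d_gt0 := dhomog_generators_degree_gt0 f_homog (ex_intro _ h Eh) not_unit.
rewrite (pihomog_partitionE (mf := mdeg) (leqnn (msize g))).
apply: ideal_sum => // de _.
apply: (prime_ideal_dhomog_vanishing P_prime _
          (ideal_koszul_relations P_ideal P_syz h) (pihomogP _ _ _)).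
  by rewrite -Eh rmorphXn /= comp_mpolyXU nth_mktuple; apply: prime_idealX P_prime nPpc.
rewrite -comp_mpolyA -(pihomog_comp_mpoly _ _ d_gt0); last first.
  by move=> i; rewrite tnth_mktuple.
by move: gf; rewrite /image_ideal => ->; rewrite !raddf0.
Qed.

End JacobianDual.

Theorem lemma2p3 (k : fieldType) (n r N d : nat)
    (f : 'I_r -> {mpoly k[n]}) (a : 'I_N -> 'I_r -> {mpoly k[n]}) :
  (0 < n)%N ->
  (* I = (f_1,...,f_r) generated by forms of common degree d *)
  (forall i, f i \is d.-homog) ->
  (* I is m-primary: sqrt(I) = m = (x_1,...,x_n), I proper *)
  (forall l : 'I_n, exists e : nat, in_ideal f ('X_l ^+ e)) ->
  ~ in_ideal f 1 ->
  (* linearly presented, a_1..a_N minimal generators of the syzygy module *)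
  minimal_linear_presentation f a ->
  forall g : {mpoly k[r]},
    in_radical (maximal_minors (jacobian_dual a)) g <-> image_ideal f g.
Proof.
move=> n_gt0 f_homog m_primary not_unit [a_linear a_syz a_gen _] g; split.
  exact: image_ideal_of_radical.
move=> gf; apply: contrapT => g_not_radical.
have [|P [P_prime minors_P nPg]] := exists_prime_avoiding_powers (g := g)
    (in_ideal_is_ideal (maximal_minors (jacobian_dual a))).
  by move=> e ge; apply: g_not_radical; exists e.
apply/nPg/(image_ideal_sub_prime a_linear f_homog m_primary not_unit a_gen P_prime) => //.
by move=> s; apply/minors_P/in_ideal_gen.
Qed.
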